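(* Let $A$ be a locally convex topological vector space and give $\mathrm{Max}\,A$ the topology $\mathcal T$ generated by the sets $\mathcal U_{0,V}=\{W\in\mathrm{Max}\,A:W\not\subset V\}$, $V\in\mathrm{Max}\,A$. Then $(\mathrm{Max}\,A,\mathcal T)$ is sober, and for every $V\in\mathrm{Max}\,A$ the complement of the closure of $\{V\}$ equals $\mathcal U_{0,V}$.
   Context: $\mathrm{Max}\,A$ is the set of closed linear subspaces of $A$. A space is sober if every irreducible closed set is the closure of a unique point. *)

From HB Require Import structures.
From mathcomp Require Import all_boot all_order all_algebra.
From mathcomp Require Import all_classical all_reals all_analysis.
Set Implicit Arguments. Unset Strict Implicit. Unset Printing Implicit Defensive.
Import Order.TTheory GRing.Theory Num.Theory.
Local Open Scope classical_set_scope.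
Local Open Scope ring_scope.

Definition linear_subspace (K : numDomainType) (A : lmodType K) (V : set A) : Prop :=
  V 0 /\ forall (a : K) (x y : A), V x -> V y -> V (a *: x + y).

Definition is_closed_subspace (K : numDomainType) (A : tvsType K) (V : set A) : Prop :=
  closed V /\ linear_subspace V.

Definition MaxA (K : numDomainType) (A : tvsType K) : Type :=
  {V : set A | is_closed_subspace V}.

Definition U0 (K : numDomainType) (A : tvsType K) (V : set A) : set (MaxA A) :=
  [set W | ~ (proj1_sig W `<=` V)].

HB.instance Definition _ (K : numDomainType) (A : tvsType K) :=
  gen_eqMixin (MaxA A).
HB.instance Definition _ (K : numDomainType) (A : tvsType K) :=
  gen_choiceMixin (MaxA A).

HB.instance Definition _ (K : numDomainType) (A : tvsType K) :=
  @isSubBaseTopological.Build (MaxA A) (set A) (@is_closed_subspace K A) (@U0 K A).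

Definition irreducible (T : topologicalType) (F : set T) : Prop :=
  F !=set0 /\
  forall F1 F2 : set T, closed F1 -> closed F2 -> F1 `<=` F -> F2 `<=` F ->
    F = F1 `|` F2 -> F1 = F \/ F2 = F.

Definition sober (T : topologicalType) : Prop :=
  forall F : set T, closed F -> irreducible F -> exists! x : T, F = closure [set x].

From HB Require Import structures.
From mathcomp Require Import all_boot all_order all_algebra.
From mathcomp Require Import all_classical all_reals all_analysis.
Local Open Scope classical_set_scope.

(** The specialization order of [Max A] is inclusion: open sets are
  upward closed, so the closure of [V] is the down-set of [V], whose
  complement is [U0 V].  If [W] lies outside a closed set [F], some basic
  open set [U0 V1 `&` ... `&` U0 Vn] contains [W] and misses [F], so [F] is
  covered by the finitely many closed down-sets of the [Vi], none of which
  contains [W].  An irreducible [F] then lies in a single one of them, and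
  it follows that [F] is the down-set of the closed linear span [D] of its
  members, i.e. the closure of [D]; [D] is unique since inclusion is
  antisymmetric. *)

Section Irreducible.
Set Implicit Arguments.
Unset Strict Implicit.
Variable T : topologicalType.

Lemma irreducible_sub_bigsetU (I : eqType) (F : set T)
    (s : seq I) (C : I -> set T) :
  closed F -> irreducible F -> (forall i, i \in s -> closed (C i)) ->
  F `<=` \big[setU/set0]_(i <- s) C i -> exists2 i, i \in s & F `<=` C i.
Proof.
move=> cF [[x Fx] irrF]; elim: s => [|j s IHs] cC.
  by rewrite big_nil => /(_ x Fx).
have cCj : closed (C j) by apply: cC; rewrite mem_head.
have cCs : forall i, i \in s -> closed (C i).
  by move=> i si; apply: cC; rewrite in_cons si orbT.
rewrite big_cons => FCs.
have FE : F = (F `&` C j) `|` (F `&` \big[setU/set0]_(i <- s) C i).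
  by rewrite -setIUr; apply/esym/setIidPl.
have [Fj|Fs] := irrF _ _ (closedI cF cCj) (closedI cF (closed_bigsetU cCs))
  (@subIsetl _ _ _) (@subIsetl _ _ _) FE.
- by exists j; [rewrite mem_head | rewrite -Fj => ? []].
- have [i si FCi] : exists2 i, i \in s & F `<=` C i.
    by apply: IHs; rewrite // -Fs => ? [].
  by exists i; rewrite ?in_cons ?si ?orbT.
Qed.

End Irreducible.

Section MaxA.
Set Implicit Arguments.
Unset Strict Implicit.
Variables (K : numFieldType) (A : tvsType K).

Definition downset (V : set A) : set (MaxA A) := [set W | sval W `<=` V].

Lemma setC_downset (V : set A) : ~` downset V = U0 V.
Proof. by []. Qed.

Lemma open_U0 (V : MaxA A) : open (U0 (sval V)).
Proof.
exists [set U0 (sval V)]; last by rewrite bigcup_set1.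
by move=> _ ->; apply: finI_from1; exact: (proj2_sig V).
Qed.

Lemma closed_downset (V : set A) : is_closed_subspace V -> closed (downset V).
Proof.
by move=> hV; rewrite -openC setC_downset; exact: (open_U0 (exist _ V hV)).
Qed.

Lemma open_MaxA_upclosed (O : set (MaxA A)) (W W' : MaxA A) :
  open O -> O W -> sval W `<=` sval W' -> O W'.
Proof.
move=> [D sD <-] [B DB BW] WW'; exists B => //.
have := sD _ DB => -[G _ GB]; move: BW; rewrite -GB /= => BW V GV.
by apply: contra_not (BW V GV); apply: subset_trans.
Qed.

Lemma closure_set1_MaxA (V : MaxA A) : closure [set V] = downset (sval V).
Proof.
apply/seteqP; split.
  have /closure_id -> := closed_downset (proj2_sig V).
  by apply: closureS => _ ->.
move=> W WV B; rewrite nbhsE => -[U [oU UW] UB].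
by exists V; split => //; apply: UB; exact: open_MaxA_upclosed oU UW WV.
Qed.

Lemma closure_set1_MaxA_inj : injective (fun V : MaxA A => closure [set V]).
Proof.
move=> [V hV] [W hW]; rewrite /= !closure_set1_MaxA /= => VW.
have sVW : V `<=` W by have : downset V (exist _ V hV) by []; rewrite VW.
have sWV : W `<=` V by have : downset W (exist _ W hW) by []; rewrite -VW.
have eVW : V = W by apply/seteqP.
by subst W; congr exist; exact: Prop_irrelevance.
Qed.

Lemma closed_MaxA_sub_downsets (F : set (MaxA A)) (W : MaxA A) :
  closed F -> ~ F W ->
  exists s : seq (set A), [/\ forall V, V \in s -> is_closed_subspace V,
    F `<=` \big[setU/set0]_(V <- s) downset V
    & forall V, V \in s -> ~ sval W `<=` V].
Proof.
move=> cF nFW; have := closed_openC cF => -[D sD DF].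
have : (~` F) W by []; rewrite -DF => -[B DB BW].
have := sD _ DB => -[G sG GB]; move: BW; rewrite -GB /= => BW.
exists (finmap.enum_fset G); split => //; first by move=> V /sG /set_mem.
rewrite -bigcup_fset => X FX; apply: contrapT => nX.
have BX : B X by rewrite -GB /= => V GV XV; apply: nX; exists V.
by have : (~` F) X by rewrite -DF; exists B.
Qed.

Lemma is_closed_subspace_bigcap (I : Type) (D : set I) (V : I -> set A) :
  (forall i, D i -> is_closed_subspace (V i)) ->
  is_closed_subspace (\bigcap_(i in D) V i).
Proof.
move=> hV; split; first by apply: closed_bigI => i /hV [].
split; first by move=> i /hV [_ []].
move=> a x y Vx Vy i Di; have [_ [_ lin]] := hV i Di.
by apply: lin; [exact: Vx | exact: Vy].
Qed.

Definition closed_span (F : set (MaxA A)) : set A :=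
  \bigcap_(V in [set V | is_closed_subspace V /\ F `<=` downset V]) V.

Lemma closed_span_closed_subspace (F : set (MaxA A)) :
  is_closed_subspace (closed_span F).
Proof. by apply: is_closed_subspace_bigcap => V []. Qed.

Lemma sub_downset_closed_span (F : set (MaxA A)) :
  F `<=` downset (closed_span F).
Proof. by move=> X FX x Xx V [_ FV]; exact: FV X FX x Xx. Qed.

Lemma irreducible_closed_MaxA_downset (F : set (MaxA A)) :
  closed F -> irreducible F -> F = downset (closed_span F).
Proof.
move=> cF irrF; apply/seteqP; split; first exact: sub_downset_closed_span.
move=> X XF; apply: contrapT => nFX.
have [s [cs Fs nXs]] := closed_MaxA_sub_downsets cF nFX.
have [V sV FV] := irreducible_sub_bigsetU cF irrF
  (fun V sV => closed_downset (cs V sV)) Fs.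
by apply: (nXs V sV) => x Xx; exact: XF x Xx V (conj (cs V sV) FV).
Qed.

Lemma sober_MaxA : sober (MaxA A).
Proof.
move=> F cF irrF; have FE := irreducible_closed_MaxA_downset cF irrF.
exists (exist _ _ (closed_span_closed_subspace F)); split.
  by rewrite closure_set1_MaxA.
by move=> W FW; apply: closure_set1_MaxA_inj; rewrite /= -FW closure_set1_MaxA.
Qed.

End MaxA.

Theorem lemma3p8 (K : numFieldType) (A : tvsType K) :
  sober (MaxA A) /\
  forall V : MaxA A, ~` closure [set V] = U0 (proj1_sig V).
Proof.
split; first exact: sober_MaxA.
by move=> V; rewrite closure_set1_MaxA setC_downset.
Qed.
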